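(* Let $\mathcal X$ be a normed space, $\mathcal Y=\{1,\dots,C\}$, and $\eta_c(\mathbf x)=p(y=c\mid\mathbf x)$ class-conditional probabilities, each $\lambda^{\eta}$-Lipschitz in $\mathbf x$. Let $\tilde{\mathbf x}_1,\dots,\tilde{\mathbf x}_b\in\mathcal X$ be fixed selected points and $l(\cdot,\cdot;A_{\mathbf s}):\mathcal X\times\mathcal Y\to[0,L]$ a loss such that $\mathbf x\mapsto l(\mathbf x,y;A_{\mathbf s})$ is $\lambda^l$-Lipschitz for each $y$ and $l(\tilde{\mathbf x}_k,y;A_{\mathbf s})=0$ for all $k$ and $y$. Then for every $\mathbf x\in\mathcal X$, $$\mathbb E_{y\sim p(\cdot\mid\mathbf x)}\big[l(\mathbf x,y;A_{\mathbf s})\big]\le\big(\lambda^l+\lambda^{\eta}LC\big)\,|\mathbf x-\pi(\mathbf x)|,$$ and consequently $$\mathbb E_{(\mathbf x,y)\sim p_{\mathcal Z}}\big[l(\mathbf x,y;A_{\mathbf s})\big]\le\big(\lambda^l+\lambda^{\eta}LC\big)\max_{k}\mathbb E_{\mathbf x\sim\mathbb N_{\mathbf s}(k)}\big[|\mathbf x-\tilde{\mathbf x}_k|\big].$$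
   Context: $\pi(\mathbf x)=\arg\min_{\tilde{\mathbf x}\in\{\tilde{\mathbf x}_1,\dots,\tilde{\mathbf x}_b\}}|\mathbf x-\tilde{\mathbf x}|$ (ties broken by a fixed rule). Coverage area $\mathbb N_{\mathbf s}(k)=\{\mathbf x:\pi(\mathbf x)=\tilde{\mathbf x}_k\}$; $\mathbf x\sim\mathbb N_{\mathbf s}(k)$ denotes the conditional distribution $p(\mathbf x\mid\pi(\mathbf x)=\tilde{\mathbf x}_k)$ of the marginal of $p_{\mathcal Z}$; the max is over $k$ with $p(\pi(\mathbf x)=\tilde{\mathbf x}_k)>0$. *)

From HB Require Import structures.
From mathcomp Require Import all_boot all_order all_algebra.
From mathcomp Require Import all_classical all_reals all_analysis.
Set Implicit Arguments. Unset Strict Implicit. Unset Printing Implicit Defensive.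
Import Order.TTheory GRing.Theory Num.Theory.
Import numFieldNormedType.Exports.
Local Open Scope classical_set_scope.
Local Open Scope ring_scope.

Definition lipschitz_with {R : realType} {X : normedModType R}
  (lam : R) (f : X -> R) : Prop :=
  forall x x' : X, `|f x - f x'| <= lam * `|x - x'|.

Definition nearest_map {R : realType} {X : normedModType R} {b : nat}
  (xt : 'I_b -> X) (pi : X -> 'I_b) : Prop :=
  forall (x : X) (k : 'I_b), `|x - xt (pi x)| <= `|x - xt k|.

From HB Require Import structures.
From mathcomp Require Import all_boot all_order all_algebra.
From mathcomp Require Import all_classical all_reals all_analysis.
From mathcomp Require Import measurable_realfun.
Import Order.TTheory GRing.Theory Num.Theory.
Import numFieldNormedType.Exports.
Local Open Scope classical_set_scope.
Local Open Scope ring_scope.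

(* The loss vanishes at the selected points and is lambda^l-Lipschitz, so
   l(x, y) <= lambda^l |x - pi(x)| for every label y; the extra term
   lambda^eta L C |x - pi(x)| is nonnegative, since a Lipschitz constant is
   nonnegative as soon as two points differ.  Averaging over y gives the first
   bound.  For the second, integrate the pointwise bound and split the
   expectation of |x - pi(x)| along the coverage areas pi^-1(k): it is the
   P(N_k)-weighted mean of the per-area averages, hence at most their maximum. *)

Section lipschitz_with.
Context {R : realType} {X : normedModType R}.
Context {lam : R} {f : X -> R}.

Lemma lipschitz_with_continuous : lipschitz_with lam f -> continuous f.
Proof.
move=> hf x; apply/cvgrPdist_lt => e e0.
set m := Num.max lam 1.
have m0 : 0 < m by rewrite lt_max ltr01 orbT.
have near_x := cvgr_dist_lt id x (@cvg_id _ (nbhs x)) _ (divr_gt0 e0 m0).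
near=> y; have xy : `|x - y| < e / m by near: y; exact: near_x.
have lam_m : lam * `|x - y| <= m * `|x - y| by rewrite ler_wpM2r // le_max lexx.
apply: le_lt_trans (hf x y) (le_lt_trans lam_m _).
by rewrite mulrC -ltr_pdivlMr.
Unshelve. all: by end_near.
Qed.

Lemma lipschitz_with_ge0 (x x' : X) :
  lipschitz_with lam f -> x != x' -> 0 <= lam.
Proof.
move=> hf xx'; have := le_trans (normr_ge0 _) (hf x x').
by rewrite pmulr_lge0 // normr_gt0 subr_eq0.
Qed.

Lemma lipschitz_with_le_dist (a x : X) :
  lipschitz_with lam f -> f a = 0 -> f x <= lam * `|x - a|.
Proof. by move=> hf fa0; apply: le_trans (hf x a); rewrite fa0 subr0 ler_norm. Qed.

End lipschitz_with.

Lemma lipschitz_with_dist_to {R : realType} {X : normedModType R} (a : X) :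
  lipschitz_with 1 (fun x : X => `|x - a|).
Proof.
move=> x y; rewrite mul1r; apply: le_trans (ler_dist_dist _ _) _.
by rewrite opprB addrA subrK.
Qed.

Lemma convex_combination_le (R : numDomainType) (I : finType) (w a : I -> R)
    (B : R) :
  (forall i, 0 <= w i) -> \sum_i w i = 1 -> (forall i, a i <= B) ->
  \sum_i w i * a i <= B.
Proof.
move=> w0 w1 aB; rewrite -[B]mul1r -w1 big_distrl /=.
by apply: ler_sum => i _; rewrite ler_wpM2l.
Qed.

Section measurable_fun_lemmas.
Context {d : measure_display} {T : measurableType d} {R : realType}.

Lemma measurable_comp_continuous (X : normedModType R) (xr : T -> X)
    (f : X -> R) :
  (forall B : set X, open B -> measurable (xr @^-1` B)) -> continuous f ->
  measurable_fun setT (fun w => f (xr w)).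
Proof.
move=> hxr /continuousP cf.
apply: (measurability _ (RGenOpens.measurableE R)).
move=> _ [_ [a [b ->]] <-]; rewrite setTI.
exact: (hxr (f @^-1` `]a, b[) (cf _ (interval_open _ _))).
Qed.

Lemma measurable_fun_at_index {I : finType} {y : T -> I} (F : I -> T -> R) :
  (forall i, measurable (y @^-1` [set i])) ->
  (forall i, measurable_fun setT (F i)) ->
  measurable_fun setT (fun w => F (y w) w).
Proof.
move=> my mF.
have -> : (fun w => F (y w) w) =
          (fun w => \sum_i \1_(y @^-1` [set i]) w * F i w).
  apply/funext => w; rewrite (bigD1 (y w)) //= big1 ?addr0.
    by rewrite indicE mem_set // mul1r.
  move=> i /negbTE yi; rewrite indicE memNset ?mul0r // => /= iy.
  by rewrite iy eqxx in yi.
by apply: measurable_sum => i; apply: measurable_funM.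
Qed.

End measurable_fun_lemmas.

Section fiber_average.
Context {d : measure_display} {T : measurableType d} {R : realType}.
Context {P : probability T R}.
Context {b : nat} {h : T -> 'I_b} {g : 'I_b -> T -> R}.
Hypothesis mh : forall k, measurable (h @^-1` [set k]).
Hypothesis mg : forall k, measurable_fun setT (g k).
Hypothesis g0 : forall k w, 0 <= g k w.

Local Notation fiber k := (h @^-1` [set k]).
Local Notation max_average :=
  (\big[Order.max/-oo]_(k < b | (0 < P (fiber k))%E)
     ((\int[P]_(w in fiber k) (g k w)%:E) * ((fine (P (fiber k)))^-1)%:E))%E.

Lemma fiber_integral_le_max_average k :
  (\int[P]_(w in fiber k) (g k w)%:E <= max_average * P (fiber k))%E.
Proof.
have := measure_ge0 P (fiber k); rewrite le_eqVlt => /predU1P[P0|Ppos].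
  rewrite -P0 mule0 null_set_integral //.
  exact/measurable_EFinP/measurable_funTS.
pose p := fine (P (fiber k)).
have Pp : P (fiber k) = p%:E by rewrite /p fineK // fin_num_measure.
have p0 : 0 < p by rewrite -lte_fin -Pp.
rewrite Pp; apply: le_trans (lee_wpmul2r _ (le_bigmax_cond _ _ Ppos)); last first.
  by rewrite lee_fin ltW.
by rewrite -/p -muleA -EFinM mulVf ?gt_eqF // mule1.
Qed.

Lemma integral_le_max_fiber_average :
  (\int[P]_w (g (h w) w)%:E <= max_average)%E.
Proof.
have fibers_cover : \big[setU/set0]_(k < b) fiber k = setT.
  by apply/seteqP; split => // w _; rewrite (bigD1 (h w)) //=; left.
have fibers_disj : trivIset setT (fun k => fiber k).
  by move=> i j _ _ [w [/= <- <-]].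
have fibers_mass : (\sum_(k < b) P (fiber k) = 1)%E.
  rewrite -measure_semi_additive_ord ?fibers_cover //; exact: probability_setT.
have integral_split : (\int[P]_w (g (h w) w)%:E
    = \sum_(k < b) \int[P]_(w in fiber k) (g (h w) w)%:E)%E.
  rewrite -[in LHS]fibers_cover; apply: ge0_integral_bigsetU => //.
  - exact: index_enum_uniq.
  - exact: sub_trivIset fibers_disj.
  - by rewrite fibers_cover; exact/measurable_EFinP/measurable_fun_at_index.
  - by move=> w _; rewrite lee_fin.
have fiberwise k :
    (\int[P]_(w in fiber k) (g (h w) w)%:E <= max_average * P (fiber k))%E.
  rewrite (eq_integral (fun w => (g k w)%:E)) ?fiber_integral_le_max_average //.
  by move=> w; rewrite inE /= => ->.
rewrite integral_split.
apply: (le_trans (y := \sum_(k < b) max_average * P (fiber k))%E).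
  by apply: lee_sum => k _; exact: fiberwise.
by rewrite -ge0_sume_distrr ?fibers_mass ?mule1 // => k _; exact: measure_ge0.
Qed.

Lemma integral_le_scale_max_fiber_average (f : T -> R) (K : R) :
  measurable_fun setT f -> (forall w, 0 <= f w) ->
  (forall w, f w <= K * g (h w) w) ->
  (\int[P]_w (f w)%:E <= K%:E * max_average)%E.
Proof.
move=> mf f0 fK.
have mgh : measurable_fun setT (fun w => (g (h w) w)%:E).
  exact/measurable_EFinP/measurable_fun_at_index.
have [K0|K0] := leP 0 K.
  apply: le_trans (lee_wpmul2l _ integral_le_max_fiber_average); last first.
    by rewrite lee_fin.
  rewrite -ge0_integralZl_EFin // => [|w _]; last by rewrite lee_fin.
  apply: ge0_le_integral => // [w _|||w _]; rewrite ?lee_fin //.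
  - exact/measurable_EFinP.
  - by apply: measurable_funeM.
have gh0 w : g (h w) w = 0.
  apply/eqP; rewrite eq_le g0 andbT -(nmulr_rge0 _ K0).
  exact: le_trans (f0 w) (fK w).
have f_eq0 w : f w = 0.
  by apply/eqP; rewrite eq_le f0 andbT; have := fK w; rewrite gh0 mulr0.
rewrite integral0_eq => [|w _]; last by rewrite f_eq0.
apply: mule_le0; first by rewrite lee_fin ltW.
apply: bigmax_le => [|k _]; first exact: leNye.
by rewrite integral0_eq ?mul0e // => w /= <-; rewrite gh0.
Qed.

End fiber_average.

Theorem mainTheorem3
  (R : realType) (X : normedModType R) (C b : nat)
  (eta : X -> 'I_C -> R) (lam_eta : R)
  (heta0 : forall x c, 0 <= eta x c)
  (heta1 : forall x, \sum_(c < C) eta x c = 1)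
  (heta_lip : forall c, lipschitz_with lam_eta (fun x => eta x c))
  (xt : 'I_b -> X) (pi : X -> 'I_b) (hpi : nearest_map xt pi)
  (l : X -> 'I_C -> R) (L lam_l : R)
  (hl_range : forall x c, 0 <= l x c <= L)
  (hl_lip : forall c, lipschitz_with lam_l (fun x => l x c))
  (hl_zero : forall k c, l (xt k) c = 0)
  (d : measure_display) (T : measurableType d) (P : probability T R)
  (xr : T -> X) (yr : T -> 'I_C)
  (hxr : forall B : set X, open B -> measurable (xr @^-1` B))
  (hyr : forall c, measurable (yr @^-1` [set c]))
  (hcell : forall k, measurable (xr @^-1` (pi @^-1` [set k])))
  (hcond : forall (B : set X) (c : 'I_C), measurable (xr @^-1` B) ->
     P (xr @^-1` B `&` yr @^-1` [set c])
     = (\int[P]_(w in xr @^-1` B) (eta (xr w) c)%:E)%E) :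
  (forall x : X,
     \sum_(c < C) eta x c * l x c
     <= (lam_l + lam_eta * L * C%:R) * `|x - xt (pi x)|)
  /\
  ((\int[P]_w (l (xr w) (yr w))%:E
   <= ((lam_l + lam_eta * L * C%:R)%:E *
       \big[Order.max/-oo]_(k < b | (0 < P (xr @^-1` (pi @^-1` [set k])))%E)
          ((\int[P]_(w in xr @^-1` (pi @^-1` [set k])) (`|xr w - xt k|)%:E)
           * ((fine (P (xr @^-1` (pi @^-1` [set k]))))^-1)%:E)))%E).
Proof.
set K := lam_l + lam_eta * L * C%:R.
have loss_le x c : l x c <= K * `|x - xt (pi x)|.
  apply: le_trans (lipschitz_with_le_dist _ x (hl_lip c) (hl_zero (pi x) c)) _.
  rewrite /K mulrDl lerDl.
  have [->|] := eqVneq (x - xt (pi x)) 0; first by rewrite normr0 mulr0.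
  rewrite subr_eq0 => xx.
  have L0 : 0 <= L by case/andP: (hl_range x c); apply: le_trans.
  by rewrite !mulr_ge0 // (lipschitz_with_ge0 _ _ (heta_lip c) xx).
split=> [x|]; first exact: convex_combination_le (heta0 x) (heta1 x) (loss_le x).
apply: (integral_le_scale_max_fiber_average
          (h := fun w => pi (xr w)) (g := fun k w => `|xr w - xt k|) hcell) => //.
- move=> k; have := lipschitz_with_continuous (lipschitz_with_dist_to (xt k)).
  exact: measurable_comp_continuous hxr.
- apply: (measurable_fun_at_index (fun c w => l (xr w) c) hyr) => c.
  exact: measurable_comp_continuous hxr (lipschitz_with_continuous (hl_lip c)).
- by move=> w; case/andP: (hl_range (xr w) (yr w)).
Qed.
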